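(* Let $C>1$, $P$ a probability measure on $[0,\infty)$, and $\alpha>0$ such that $\alpha\,\mu_{P,C}\le\mathbb{E}_{t\sim P}\big[t\,\mathbf 1[t<m_P]\big]$. Then $G_{P,C}\big(\tfrac1Cm_P\big)\ge\alpha\,\mu_{P,C}$.
   Context: For $\mu\ge0$ define $G_{P,C}(\mu):=\mathbb{E}_{t\sim P}[\min\{t,C\mu\}]-\mu$. The $C$-clipped mean $\mu_{P,C}$ is the largest $\mu\ge0$ with $G_{P,C}(\mu)=0$. The $\frac1C$-median is $m_P:=\sup\{M\ge0:\mathbb{P}_{t\sim P}[t\ge M]\ge\frac1C\}$. (In the paper this is applied with $P=P_x$, the law of $\|\nabla L_\gamma(x)\|_2^2$, under the assumption that such an $\alpha=\alpha_C$ works uniformly for all $x\ne0$.) *)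

From HB Require Import structures.
From mathcomp Require Import all_boot all_order all_algebra.
From mathcomp Require Import all_classical all_reals all_analysis.
Set Implicit Arguments. Unset Strict Implicit. Unset Printing Implicit Defensive.
Import Order.TTheory GRing.Theory Num.Theory.
Local Open Scope classical_set_scope.
Local Open Scope ring_scope.

(* P : a probability measure on the Borel sets of R, supported on [0,oo):
   P [set t | t < 0] = 0. *)

Definition Gclip (R : realType) (P : probability R R) (C mu : R) : \bar R :=
  ((\int[P]_t (Order.min t (C * mu))%:E) - mu%:E)%E.

Definition is_clipped_mean (R : realType) (P : probability R R) (C mu : R) : Prop :=
  0 <= mu /\ Gclip P C mu = 0%E /\
  (forall nu : R, 0 <= nu -> Gclip P C nu = 0%E -> nu <= mu).

Definition inv_median (R : realType) (P : probability R R) (C : R) : R :=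
  sup [set M : R | 0 <= M /\ ((C^-1)%:E <= P [set t : R | (M <= t)%R])%E].

From HB Require Import structures.
From mathcomp Require Import all_boot all_order all_algebra.
From mathcomp Require Import all_classical all_reals all_analysis.
From mathcomp Require Import measurable_realfun.
Import Order.TTheory GRing.Theory Num.Theory.
Local Open Scope classical_set_scope.
Local Open Scope ring_scope.

(* Clipping at [m] splits [E[min(t, m)]] into [E[t 1(t < m)] + m P[t >= m]].
   The tail [P[t >= M]] is left-continuous in [M] (continuity from above of a
   finite measure), so the supremum [m] defining the median still satisfies
   [P[t >= m] >= 1/C]; hence [m P[t >= m] >= m/C], and [G(m/C)] dominates
   [E[t 1(t < m)] >= alpha mu]. *)

Section real_line.
Variable R : realType.

Lemma measurable_set_lt (m : R) : measurable [set t : R | t < m].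
Proof.
have -> : [set t : R | t < m] = [set` `]-oo, m[].
  by apply/seteqP; split=> x /=; rewrite in_itv.
exact: measurable_itv.
Qed.

Lemma measurable_set_ge (m : R) : measurable [set t : R | m <= t].
Proof.
have -> : [set t : R | m <= t] = [set` `[m, +oo[].
  by apply/seteqP; split=> x /=; rewrite in_itv /= andbT.
exact: measurable_itv.
Qed.

Lemma integral_min_split (mu : {measure set R -> \bar R}) (m : R) :
  (\int[mu]_t (Order.min t m)%R%:E =
   \int[mu]_(t in [set t | (t < m)%R]) t%:E + m%:E * mu [set t | (m <= t)%R])%E.
Proof.
have min_mfun : measurable_fun setT
    ((fun t : R => (Order.min t m)%:E) : R -> \bar R).
  by apply/measurable_EFinP; exact: measurable_minr.
have -> : [set: R] = [set t | t < m] `|` [set t | m <= t].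
  by apply/seteqP; split=> x //= _; case: (ltP x m); [left | right].
rewrite integral_setU; last 4 first.
- exact: measurable_set_lt.
- exact: measurable_set_ge.
- exact: measurable_funS min_mfun.
- by rewrite disj_set2E; apply/eqP/seteqP; split=> x // [/= /lt_geF ->].
congr (_ + _)%E.
  by apply: eq_integral => t; rewrite inE /= => /ltW tm; rewrite min_l.
rewrite -integral_cst; last exact: measurable_set_ge.
by apply: eq_integral => t; rewrite inE /= => mt; rewrite min_r.
Qed.

Lemma tail_measure_sup (mu : {finite_measure set R -> \bar R}) (c : \bar R)
    (S : set R) :
  has_sup S -> (forall M, S M -> (c <= mu [set t | (M <= t)%R])%E) ->
  (c <= mu [set t | (sup S <= t)%R])%E.
Proof.
move=> supS Sc.
pose F n := [set t : R | sup S - n.+1%:R^-1 <= t].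
have capF : \bigcap_n F n = [set t | sup S <= t].
  apply/seteqP; split=> x /=; last first.
    by move=> Sx n _; apply: le_trans Sx; rewrite /F /= gerBl.
  move=> Fx; rewrite leNgt; apply/negP => xS.
  have := Fx (Num.truncn (sup S - x)^-1) I; rewrite /F /= lerBlDr -lerBlDl.
  by rewrite leNgt -invf_plt ?posrE ?subr_gt0 // truncnS_gt.
have cF n : (c <= mu (F n))%E.
  have eps_gt0 : 0 < n.+1%:R^-1 :> R by rewrite invr_gt0.
  have [M SM ltM] := sup_adherent eps_gt0 supS.
  apply: le_trans (Sc _ SM) _.
  apply: le_measure; rewrite ?inE; [exact: measurable_set_ge.. |].
  by move=> t /= Mt; apply: le_trans Mt; exact: ltW.
have muF : (mu \o F) @ \oo --> mu (\bigcap_n F n).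
  apply: nonincreasing_cvg_mu => //.
  - by rewrite -ge0_fin_numE // fin_num_measure //; exact: measurable_set_ge.
  - by move=> n; exact: measurable_set_ge.
  - by rewrite capF; exact: measurable_set_ge.
  - move=> a b ab; apply/subsetPset => t /=; apply: le_trans.
    by rewrite lerD2l lerN2 lef_pV2 ?posrE // ler_nat.
rewrite -capF -(cvg_lim _ muF) //.
by apply: lime_ge; [apply/cvg_ex; exists (mu (\bigcap_n F n)) | exact: nearW].
Qed.

End real_line.

Lemma inv_median_ge0 {R : realType} (P : probability R R) (C : R) :
  0 <= inv_median P C.
Proof.
rewrite /inv_median; set S := [set M | _].
have [supS|noSup] := pselect (has_sup S); last by rewrite sup_out.
have [M SM] := supS.1.
exact: le_trans SM.1 (ub_le_sup supS.2 SM).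
Qed.

Lemma inv_median_tail {R : realType} (P : probability R R) (C : R) :
  inv_median P C = 0 \/
  ((C^-1)%:E <= P [set t | (inv_median P C <= t)%R])%E.
Proof.
rewrite /inv_median; set S := [set M | _].
have [supS|noSup] := pselect (has_sup S); last by left; exact: sup_out.
by right; apply: tail_measure_sup supS _ => M [].
Qed.

Theorem mainTheorem17 (R : realType) (P : probability R R) (C alpha mu : R) :
  1 < C ->
  P [set t : R | (t < 0)%R] = 0%E ->
  0 < alpha ->
  is_clipped_mean P C mu ->
  ((alpha * mu)%:E <=
     \int[P]_(t in [set t : R | (t < inv_median P C)%R]) t%:E)%E ->
  ((alpha * mu)%:E <= Gclip P C (C^-1 * inv_median P C))%E.
Proof.
move=> C1 _ _ _ lower_bound.
have C_gt0 : 0 < C by exact: lt_trans C1.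
rewrite /Gclip mulrA mulfV ?gt_eqF // mul1r integral_min_split -addeA.
apply: (le_trans lower_bound); apply: leeDl.
rewrite sube_ge0 ?fin_numE //.
have [->|tail] := inv_median_tail P C; first by rewrite mul0e mulr0.
rewrite mulrC EFinM; apply: lee_pmul => //; rewrite lee_fin.
- exact: inv_median_ge0.
- by rewrite invr_ge0 ltW.
Qed.
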